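(* Let $R$ be a hyperring. The following are equivalent: (i) $Spec(R)$ with the Zariski topology is a $T_1$-space; (ii) $\dim(R)=0$, i.e. there are no prime hyperideals $P\subsetneq Q$ of $R$ (equivalently every prime hyperideal is maximal); (iii) $Spec(R)$ is a Hausdorff space.
   Context: Standing conventions. A hyperring means a commutative Krasner hyperring with identity: a set $R$ with a hyperoperation $+:R\times R\to\mathcal P^*(R)$ (nonempty subsets; for subsets $A,B$ one sets $A+B=\bigcup_{a\in A,b\in B}a+b$) and a binary operation $\cdot$ such that: $+$ is associative and commutative; there is $0\in R$ with $0+x=\{x\}$ for all $x$; every $x$ has a unique $-x$ with $0\in x+(-x)$; $z\in x+y$ implies $y\in -x+z$ and $x\in z-y$; $(R,\cdot)$ is a commutative monoid with identity $1$; $0\cdot x=0$; and $x(y+z)=xy+xz$. A hyperideal of $R$ is a nonempty $I\subseteq R$ with $a-b\subseteq I$ and $ra\in I$ for all $a,b\in I$, $r\in R$. A proper hyperideal $P$ is prime if $ab\in P$ implies $a\in P$ or $b\in P$; maximal hyperideals are defined as usual. $Spec(R)$ is the set of prime hyperideals of $R$; for $S\subseteq R$, $V(S)=\{P\in Spec(R): S\subseteq P\}$. The Zariski topology on $Spec(R)$ is the topology whose closed sets are the sets $V(I)$, $I$ a hyperideal of $R$. *)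

(** Commutative Krasner hyperring with identity.
    [hadd x y z] means  z \in x + y. *)
Record hyperring := HyperRing {
  carrier :> Type;
  hadd : carrier -> carrier -> carrier -> Prop;
  hmul : carrier -> carrier -> carrier;
  hzero : carrier;
  hone : carrier;
  hneg : carrier -> carrier;
  hadd_nonempty : forall x y, exists z, hadd x y z;
  hadd_assoc : forall x y z w,
    (exists u, hadd x y u /\ hadd u z w) <-> (exists v, hadd y z v /\ hadd x v w);
  hadd_comm : forall x y z, hadd x y z <-> hadd y x z;
  hadd_0 : forall x y, hadd hzero x y <-> y = x;
  hadd_neg : forall x, hadd x (hneg x) hzero;
  hneg_unique : forall x y, hadd x y hzero -> y = hneg x;
  hadd_rev : forall x y z, hadd x y z -> hadd (hneg x) z y /\ hadd z (hneg y) x;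
  hmul_assoc : forall x y z, hmul x (hmul y z) = hmul (hmul x y) z;
  hmul_comm : forall x y, hmul x y = hmul y x;
  hmul_1 : forall x, hmul hone x = x;
  hmul_0 : forall x, hmul hzero x = hzero;
  hmul_distr : forall x y z w,
    (exists u, hadd y z u /\ w = hmul x u) <-> hadd (hmul x y) (hmul x z) w
}.

Section HyperIdeals.
Variable R : hyperring.

Definition hyperideal (I : R -> Prop) : Prop :=
  (exists a, I a) /\
  (forall a b c, I a -> I b -> hadd R a (hneg R b) c -> I c) /\
  (forall r a, I a -> I (hmul R r a)).

Definition proper (I : R -> Prop) : Prop := exists x, ~ I x.

Definition prime_hyperideal (P : R -> Prop) : Prop :=
  hyperideal P /\ proper P /\
  (forall a b, P (hmul R a b) -> P a \/ P b).

(** Points of Spec(R) are the prime hyperideals (as subsets of R);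
    two points are equal iff they have the same elements. *)
Definition same_set (P Q : R -> Prop) : Prop := forall x, P x <-> Q x.

Definition V (S : R -> Prop) (P : R -> Prop) : Prop :=
  prime_hyperideal P /\ forall x, S x -> P x.

(** A set of points is represented by a
    predicate on subsets of R, only its values on prime hyperideals matter. *)
Definition zariski_open (U : (R -> Prop) -> Prop) : Prop :=
  exists I, hyperideal I /\
    forall P, prime_hyperideal P -> (U P <-> ~ V I P).

Definition spec_T1 : Prop :=
  forall P Q, prime_hyperideal P -> prime_hyperideal Q -> ~ same_set P Q ->
    exists U, zariski_open U /\ U P /\ ~ U Q.

Definition spec_hausdorff : Prop :=
  forall P Q, prime_hyperideal P -> prime_hyperideal Q -> ~ same_set P Q ->
    exists U W, zariski_open U /\ zariski_open W /\ U P /\ W Q /\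
      forall X, prime_hyperideal X -> ~ (U X /\ W X).

Definition krull_dim_zero : Prop :=
  ~ exists P Q, prime_hyperideal P /\ prime_hyperideal Q /\
      (forall x, P x -> Q x) /\ ~ same_set P Q.

End HyperIdeals.

From Stdlib Require Import Classical.
From Corelib Require Import ssreflect ssrbool.
From mathcomp Require classical_sets.

(* The Zariski closed sets V(I) are upward closed, so a prime can never be
   separated from a prime it is contained in: T1 forces dimension zero, and
   Hausdorff implies T1.  Conversely, in dimension zero an element a of a
   prime P has a power a^n killed by some s outside P (otherwise an ideal
   maximal among those avoiding the multiplicative set {s a^n | s \notin P}
   would be a prime strictly inside P).  For distinct primes P, Q pick
   a \in P \ Q; then D(s) and D(a) separate P and Q, since any prime in both
   would contain s a^n = 0 but neither s nor a. *)

Section HyperringArithmetic.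
Context {R : hyperring}.

Lemma hmulr0 (x : R) : hmul R x (hzero R) = hzero R.
Proof. by rewrite hmul_comm hmul_0. Qed.

Lemma hmulr1 (x : R) : hmul R x (hone R) = x.
Proof. by rewrite hmul_comm hmul_1. Qed.

Lemma hneg0 : hneg R (hzero R) = hzero R.
Proof. by symmetry; apply: hneg_unique; apply/hadd_0. Qed.

Lemma hmulNr (x y : R) : hmul R (hneg R x) y = hneg R (hmul R x y).
Proof.
rewrite (hmul_comm R _ y) (hmul_comm R x y); apply: hneg_unique.
rewrite -(hmulr0 y); apply/hmul_distr.
by exists (hzero R); split; [apply: hadd_neg |].
Qed.

Lemma hmulACA (a b c d : R) :
  hmul R (hmul R a b) (hmul R c d) = hmul R (hmul R a c) (hmul R b d).
Proof.
by rewrite -!hmul_assoc (hmul_assoc R b c d) (hmul_comm R b c) -hmul_assoc.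
Qed.

Fixpoint hpow (a : R) (n : nat) : R :=
  if n is S n' then hmul R a (hpow a n') else hone R.

Lemma hpowD (a : R) (n m : nat) :
  hmul R (hpow a n) (hpow a m) = hpow a (n + m).
Proof. by elim: n => [|n IHn] /=; rewrite ?hmul_1 // -hmul_assoc IHn. Qed.

End HyperringArithmetic.

Section Hyperideals.
Context {R : hyperring}.
Implicit Types (I M P : R -> Prop) (a s y : R).

Definition principal s : R -> Prop := fun z => exists r, z = hmul R r s.

Definition colon M y : R -> Prop := fun z => M (hmul R z y).

Lemma hyperideal0 {I} : hyperideal R I -> I (hzero R).
Proof. by case=> [[a Ia] [_ scaleI]]; rewrite -(hmul_0 R a); apply: scaleI. Qed.

Lemma hyperideal_principal s : hyperideal R (principal s).
Proof.
split; [|split].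
- by exists s, (hone R); rewrite hmul_1.
- move=> _ _ c [r1 ->] [r2 ->]; rewrite -hmulNr (hmul_comm R r1) (hmul_comm R _ s).
  by case/hmul_distr=> u [_ ->]; exists u; rewrite hmul_comm.
- by move=> r _ [r' ->]; exists (hmul R r r'); rewrite hmul_assoc.
Qed.

Lemma hyperideal_colon M y : hyperideal R M -> hyperideal R (colon M y).
Proof.
move=> IM; have [_ [subM scaleM]] := IM; split; [|split].
- by exists (hzero R); rewrite /colon hmul_0; apply: hyperideal0.
- move=> z1 z2 c Mz1 Mz2 Hc.
  have Hd : hadd R (hmul R y z1) (hmul R y (hneg R z2)) (hmul R y c).
    by apply/hmul_distr; exists c.
  rewrite (hmul_comm R y (hneg R z2)) hmulNr !(hmul_comm R y) in Hd.
  exact: subM Hd.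
- by move=> r z Mz; rewrite /colon -hmul_assoc; apply: scaleM.
Qed.

Lemma subset_colon M y : hyperideal R M -> forall z, M z -> colon M y z.
Proof. by move=> [_ [_ scaleM]] z Mz; rewrite /colon hmul_comm; apply: scaleM. Qed.

Lemma prime_not1 P : prime_hyperideal R P -> ~ P (hone R).
Proof.
by move=> [[_ [_ scaleP]] [[x Px] _]] P1; apply: Px; rewrite -(hmulr1 x); apply: scaleP.
Qed.

Lemma prime_hpow {P a n} : prime_hyperideal R P -> P (hpow a n) -> P a.
Proof.
move=> PP; elim: n => [|n IHn] /= Pan.
  by case: (prime_not1 _ PP).
by case: (proj2 (proj2 PP) _ _ Pan) => //; apply: IHn.
Qed.

Lemma V_principal {P s} : prime_hyperideal R P -> V R (principal s) P <-> P s.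
Proof.
move=> PP; split=> [[_ sP] | Ps]; first by apply: sP; exists (hone R); rewrite hmul_1.
by split=> // _ [r ->]; apply: (proj2 (proj2 (proj1 PP))).
Qed.

End Hyperideals.

Section MaximalDisjoint.
Context {R : hyperring} (S : R -> Prop).

Definition mult_closed : Prop :=
  S (hone R) /\ forall x y, S x -> S y -> S (hmul R x y).

Definition maximal_disjoint (M : R -> Prop) : Prop :=
  hyperideal R M /\ (forall x, M x -> ~ S x) /\
  forall N, hyperideal R N -> (forall x, N x -> ~ S x) ->
    (forall x, M x -> N x) -> forall x, N x -> M x.

(* Zorn is applied to the possibly empty sets closed under subtraction and
   scaling, so that the union of the empty chain needs no special case. *)
Lemma exists_maximal_disjoint : ~ S (hzero R) -> exists M, maximal_disjoint M.
Proof.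
move=> nS0.
pose G (I : R -> Prop) :=
  [/\ forall a b c, I a -> I b -> hadd R a (hneg R b) c -> I c,
      forall r a, I a -> I (hmul R r a) & forall x, I x -> ~ S x].
have G0 : G (fun x => x = hzero R).
  split=> [a b c -> -> | r a -> | x ->] //; last exact: hmulr0.
  by rewrite hneg0 => /hadd_0.
have [A [[subA scaleA disjA] maxA]] : exists A, G A /\
    forall B, classical_sets.proper A B -> ~ G B.
  apply: classical_sets.Zorn_bigcup => F FG Ftot; split.
  - move=> a b c [X FX Xa] [Y FY Yb] Hc.
    have [XY | YX] := Ftot X Y FX FY.
      by exists Y => //; case: (FG Y FY) => subY _ _; apply: subY Hc; [apply: XY|].
    by exists X => //; case: (FG X FX) => subX _ _; apply: subX Hc; [|apply: YX].
  - by move=> r a [X FX Xa]; exists X => //; case: (FG X FX) => _ scaleX _; apply: scaleX.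
  - by move=> x [X FX Xx]; case: (FG X FX) => _ _; apply.
have A_nonempty : exists a, A a.
  apply: NNPP => noA; apply: (maxA _ _ G0); split=> [x Ax | sub0A].
    by case: noA; exists x.
  by apply: noA; exists (hzero R); apply: sub0A.
exists A; split; first by split=> //; split.
split=> // N [_ [subN scaleN]] disjN AN x Nx.
apply: NNPP => nAx; apply: (maxA N); last by [].
by split=> // NA; apply/nAx/NA.
Qed.

Lemma maximal_disjoint_prime M :
  mult_closed -> maximal_disjoint M -> prime_hyperideal R M.
Proof.
move=> [S1 mulS] [IM [disjM maxM]]; split; [done | split].
  by exists (hone R) => M1; apply: (disjM _ M1).
move=> x y Mxy; case: (classic (M x)) => [| nMx]; [by left | right].
(* M : y would be a larger ideal avoiding S, so it meets S in some t;
   M : t avoids S because S is multiplicative, hence equals M and holds y. *)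
have [t [St Mty]] : exists t, S t /\ colon M y t.
  apply: NNPP => nmeet; apply/nMx/(maxM (colon M y)) => //.
  - exact: hyperideal_colon.
  - by move=> z Mzy Sz; apply: nmeet; exists z.
  - exact: subset_colon.
apply: (maxM (colon M t)) => //.
- exact: hyperideal_colon.
- by move=> z Mzt Sz; apply: (disjM _ Mzt); apply: mulS.
- exact: subset_colon.
- by rewrite /colon hmul_comm.
Qed.

End MaximalDisjoint.

Section KrullDimensionZero.
Variable R : hyperring.
Implicit Types (I P Q : R -> Prop) (a : R).

Lemma same_set_sym {P Q} : same_set R P Q -> same_set R Q P.
Proof. by move=> PQ x; split=> /PQ. Qed.

Lemma krull_dim_zero_same_set {P Q} :
  krull_dim_zero R -> prime_hyperideal R P -> prime_hyperideal R Q ->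
  (forall x, P x -> Q x) -> same_set R P Q.
Proof. by move=> dim0 PP PQ PsubQ; apply: NNPP => nPQ; apply: dim0; exists P, Q. Qed.

Lemma krull_dim_zero_pow_annihilated {P a} :
  krull_dim_zero R -> prime_hyperideal R P -> P a ->
  exists s n, ~ P s /\ hmul R s (hpow a n) = hzero R.
Proof.
move=> dim0 PP Pa; apply: NNPP => no_annihilator.
pose S t := exists s n, ~ P s /\ t = hmul R s (hpow a n).
have S_mult : mult_closed S.
  split; first by exists (hone R), 0; split; [exact: prime_not1 | rewrite hmul_1].
  move=> _ _ [s [n [nPs ->]]] [s' [m [nPs' ->]]].
  exists (hmul R s s'), (n + m); rewrite hmulACA hpowD; split=> //.
  by case/(proj2 (proj2 PP)).
have nS0 : ~ S (hzero R).
  by move=> [s [n [nPs E]]]; apply: no_annihilator; exists s, n.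
have [M maxM] := exists_maximal_disjoint _ nS0.
have [_ [disjM _]] := maxM.
have MsubP : forall x, M x -> P x.
  by move=> x Mx; apply: NNPP => nPx; apply: (disjM x Mx); exists x, 0; rewrite /= hmulr1.
have nMa : ~ M a.
  by move=> Ma; apply: (disjM a Ma); exists (hone R), 1; split;
    [exact: prime_not1 | rewrite /= hmulr1 hmul_1].
have MP := krull_dim_zero_same_set dim0 (maximal_disjoint_prime _ _ S_mult maxM) PP MsubP.
by apply/nMa/MP.
Qed.

Lemma zariski_open_compl_V I : hyperideal R I -> zariski_open R (fun X => ~ V R I X).
Proof. by move=> II; exists I. Qed.

Lemma zariski_open_subset {U P Q} :
  zariski_open R U -> prime_hyperideal R P -> prime_hyperideal R Q ->
  (forall x, P x -> Q x) -> U Q -> U P.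
Proof.
move=> [I [_ UI]] PP PQ PsubQ UQ; apply/UI => // -[_ IsubP].
by apply: (proj1 (UI Q PQ) UQ); split=> // x /IsubP /PsubQ.
Qed.

Lemma spec_T1_krull_dim_zero : spec_T1 R -> krull_dim_zero R.
Proof.
move=> T1 [P [Q [PP [PQ [PsubQ nPQ]]]]].
have [U [openU [UQ nUP]]] := T1 Q P PQ PP (fun QP => nPQ (same_set_sym QP)).
exact: nUP (zariski_open_subset openU PP PQ PsubQ UQ).
Qed.

Lemma krull_dim_zero_spec_T1 : krull_dim_zero R -> spec_T1 R.
Proof.
move=> dim0 P Q PP PQ nPQ; exists (fun X => ~ V R Q X); split.
  exact/zariski_open_compl_V/(proj1 PQ).
split=> [[_ QsubP] | ]; last by apply.
exact/nPQ/same_set_sym/(krull_dim_zero_same_set dim0 PQ PP QsubP).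
Qed.

Lemma krull_dim_zero_spec_hausdorff : krull_dim_zero R -> spec_hausdorff R.
Proof.
move=> dim0 P Q PP PQ nPQ.
have [a [Pa nQa]] : exists a, P a /\ ~ Q a.
  apply: NNPP => nPQa; apply: nPQ; apply: krull_dim_zero_same_set => // x Px.
  by apply: NNPP => nQx; apply: nPQa; exists x.
have [s [n [nPs sa0]]] := krull_dim_zero_pow_annihilated dim0 PP Pa.
exists (fun X => ~ V R (principal s) X), (fun X => ~ V R (principal a) X).
split; first exact/zariski_open_compl_V/hyperideal_principal.
split; first exact/zariski_open_compl_V/hyperideal_principal.
split; first by move/(V_principal PP).
split; first by move/(V_principal PQ).
move=> X PX [nVs nVa].
have X0 : X (hmul R s (hpow a n)) by rewrite sa0; exact: hyperideal0 (proj1 PX).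
case: (proj2 (proj2 PX) _ _ X0) => [Xs | Xan].
  exact/nVs/(V_principal PX).
exact: nVa (proj2 (V_principal PX) (prime_hpow PX Xan)).
Qed.

Lemma spec_hausdorff_T1 : spec_hausdorff R -> spec_T1 R.
Proof.
move=> T2 P Q PP PQ nPQ; have [U [W [openU [_ [UP [WQ disjUW]]]]]] := T2 P Q PP PQ nPQ.
by exists U; split=> //; split=> // UQ; apply: (disjUW Q PQ).
Qed.

End KrullDimensionZero.

Theorem mainTheorem9 (R : hyperring) :
  (spec_T1 R <-> krull_dim_zero R) /\ (krull_dim_zero R <-> spec_hausdorff R).
Proof.
split; split.
- exact: spec_T1_krull_dim_zero.
- exact: krull_dim_zero_spec_T1.
- exact: krull_dim_zero_spec_hausdorff.
- by move=> T2; apply/spec_T1_krull_dim_zero/spec_hausdorff_T1.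
Qed.
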